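(* In the setting below, for any $\vec w=(w_1,\ldots,w_n)$ with each $w_i\in W_M^Q$, \[ \theta(\vec w)-\theta^M(\vec w)=\mathrm{expdim}_G(\vec w)-\mathrm{expdim}_M(\vec w). \]
   Context: $G=\mathrm{Sp}(2r)$ with standard torus, Borel, positive roots $R^+$ ($\epsilon_i-\epsilon_j$, $i<j$; $\epsilon_i+\epsilon_j$, $i\le j$) and simple roots $\alpha_i=\epsilon_i-\epsilon_{i+1}$, $\alpha_r=2\epsilon_r$; $x_1,\ldots,x_r$ the dual basis to the simple roots. For $1\le k\le s<r$, $M\cong\mathrm{Sp}(2s)\times\mathrm{Sp}(2(r-s))$ is the centralizer in $G$ of $\tau=\mathrm{diag}(-1,\ldots,-1,1,\ldots,1,-1,\ldots,-1)$ ($2(r-s)$ ones), with roots the roots of $G$ trivial on $\tau$. $P$ is the maximal parabolic omitting $\alpha_k$ ($G/P\cong\mathrm{IG}(k,2r)$), $x_P=x_k$, $Q=M\cap P$ ($M/Q\cong\mathrm{IG}(k,2s)$), $x_Q=x_P$, $W_M^Q\subseteq W^P$ minimal coset representatives, $C_w$, $C^M_w$ the Schubert cells. $\chi_w=\sum_{\beta\in(R^+\setminus R^+_L)\cap w^{-1}R^+}\beta$ ($R_L^+$ positive roots of the Levi of $P$), $\chi^M_w$ the same sum over roots of $M$ only; $1$ denotes the identity of $W$. $\theta(\vec w)=(\chi_1-\sum_i\chi_{w_i})(x_P)$, $\theta^M(\vec w)=(\chi^M_1-\sum_i\chi^M_{w_i})(x_Q)$, $\mathrm{expdim}_G(\vec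 w)=\dim(G/P)-\sum_i\mathrm{codim}(C_{w_i})$, $\mathrm{expdim}_M(\vec w)=\dim(M/Q)-\sum_i\mathrm{codim}(C^M_{w_i})$. *)

(* Root system of type C_r = Sp(2r), Weyl group realized as
   the group of signed permutations of the r "signed indices" +-e_i. *)
From HB Require Import structures.
From mathcomp Require Import all_boot all_order all_algebra all_fingroup.
Set Implicit Arguments. Unset Strict Implicit. Unset Printing Implicit Defensive.
Import GRing.Theory Num.Theory.
Local Open Scope ring_scope.

Section TypeC.
Variable r : nat.

(* signed index (a, x) stands for e_a (x = false) or -e_a (x = true) *)
Definition sidx := ('I_r * bool)%type.

Definition evec (i : 'I_r) : 'rV[int]_r := delta_mx 0 i.
Definition svec (a : sidx) : 'rV[int]_r :=
  (if a.2 then -1 else 1) *: evec a.1.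

(* Positive roots, indexed by triples (i, j, b):
   b = false, i < j : eps_i - eps_j ;  b = true, i <= j : eps_i + eps_j
   (so (i,i,true) is 2 eps_i). *)
Definition rind := ('I_r * 'I_r * bool)%type.
Definition posroot (p : rind) : bool :=
  let '(i, j, b) := p in if b then (i <= j)%N else (i < j)%N.
Definition rvec (p : rind) : 'rV[int]_r :=
  let '(i, j, b) := p in evec i + (if b then evec j else - evec j).

Definition pos : seq 'rV[int]_r := [seq rvec p | p <- enum posroot].

Definition refl_fun (p : rind) (a : sidx) : sidx :=
  let '(i, j, b) := p in let '(c, x) := a in
  (if c == i then j else if c == j then i else c,
   if b && ((c == i) || (c == j)) then ~~ x else x).

Lemma refl_funK p : involutive (refl_fun p).
Proof.
case: p => [[i j] b] [c x] /=.
case: (eqVneq i j) => [<-|nij].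
  case: (eqVneq c i) => [->|nci]; rewrite ?eqxx ?(negPf nci) /=;
  by case: b => //=; rewrite ?negbK.
have nji : j != i by rewrite eq_sym.
case: (eqVneq c i) => [->|nci].
  by rewrite ?eqxx /= ?(negPf nji) ?(negPf nij) /= ?orbT; case: b => //=; rewrite ?negbK.
case: (eqVneq c j) => [->|ncj].
  by rewrite ?eqxx /= ?(negPf nji) ?(negPf nij) ?eqxx /= ?orbT; case: b => //=; rewrite ?negbK.
by rewrite /= (negPf nci) (negPf ncj); case: b.
Qed.

Definition refl (p : rind) : {perm sidx} := perm (inv_inj (refl_funK p)).

Definition act (g : {perm sidx}) (v : 'rV[int]_r) : 'rV[int]_r :=
  \sum_(a < r) v 0 a *: svec (g (a, false)).

Definition lenG (w : {perm sidx}) : nat :=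
  count (fun be => act w be \notin pos) pos.

Variables (s k : nat).

(* pairing beta(x_k), x_k the fundamental coweight dual to alpha_k
   (alpha_i = eps_i - eps_{i+1}, alpha_r = 2 eps_r); for k < r,
   x_k = eps_1^* + ... + eps_k^* . *)
Definition pairP (be : 'rV[int]_r) : int := \sum_(i < r | (i < k)%N) be 0 i.

(* beta is a root of the Levi L of P (omitting alpha_k) *)
Definition inLevi (be : 'rV[int]_r) : bool := pairP be == 0.

(* beta is trivial on tau = diag(-1 (s), 1 (2(r-s)), -1 (s)):
   beta(tau) = (-1)^(beta_1 + ... + beta_s) *)
Definition inM (be : 'rV[int]_r) : bool :=
  ~~ odd (absz (\sum_(i < r | (i < s)%N) be 0 i)).

(* Weyl groups of M and of the Levi of Q = M \cap P (roots R_L \cap R_M),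
   generated by the reflections in their roots *)
Definition WM : {set {perm sidx}} :=
  <<[set refl p | p in [pred p | posroot p && inM (rvec p)]]>>%g.
Definition WQ : {set {perm sidx}} :=
  <<[set refl p | p in [pred p | [&& posroot p, inM (rvec p) & inLevi (rvec p)]]]>>%g.

Definition lenM (w : {perm sidx}) : nat :=
  count (fun be => inM be && (act w be \notin pos)) pos.

(* W_M^Q : minimal-length representatives of the cosets w W_Q in W_M.
   In mathcomp (v * w) x = w (v x), so (v * w)%g is the composite w o v. *)
Definition WMQ (w : {perm sidx}) : bool :=
  (w \in WM) && [forall v in WQ, (lenM w <= lenM (v * w)%g)%N].

Definition chi (w : {perm sidx}) : 'rV[int]_r :=
  \sum_(be <- pos | ~~ inLevi be && (act w be \in pos)) be.
Definition chiM (w : {perm sidx}) : 'rV[int]_r :=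
  \sum_(be <- pos | [&& inM be, ~~ inLevi be & act w be \in pos]) be.

Definition theta (ws : seq {perm sidx}) : int :=
  pairP (chi 1%g - \sum_(w <- ws) chi w).
Definition thetaM (ws : seq {perm sidx}) : int :=
  pairP (chiM 1%g - \sum_(w <- ws) chiM w).

Definition dimGP : nat := count (fun be => ~~ inLevi be) pos.
Definition dimMQ : nat := count (fun be => inM be && ~~ inLevi be) pos.

(* Schubert cell C_w = B w P / P has dimension l(w) *)
Definition codimG (w : {perm sidx}) : int := (dimGP%:Z - (lenG w)%:Z).
Definition codimM (w : {perm sidx}) : int := (dimMQ%:Z - (lenM w)%:Z).

Definition expdimG (ws : seq {perm sidx}) : int :=
  dimGP%:Z - \sum_(w <- ws) codimG w.
Definition expdimM (ws : seq {perm sidx}) : int :=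
  dimMQ%:Z - \sum_(w <- ws) codimM w.

End TypeC.

(* Every positive root outside M is eps_i +- eps_j with i < s <= j (indices from 0), so, as
   k <= s, it pairs to 1 with x_k exactly when it lies outside the Levi of P.  An element w of
   W_M^Q keeps eps_a positive for every a >= k: otherwise composing it with the reflection in
   2 eps_a, which lies in W_Q, would shorten it.  As w also preserves the index blocks {< s} and
   {>= s}, it keeps positive every root outside M that lies in the Levi.  So each root outside M
   contributes the same amount to (chi_w - chi^M_w)(x_P) as to codim C_w - codim C^M_w, and
   summing over w = 1 and the w_i gives the identity. *)

From HB Require Import structures.
From mathcomp Require Import all_boot all_algebra all_fingroup zify.
Import GRing.Theory.
Local Open Scope ring_scope.

Section TypeC.
Local Set Implicit Arguments.
Local Unset Strict Implicit.

Lemma gen_ind (gT : finGroupType) (P : gT -> Prop) (A : {set gT}) :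
  P 1%g -> (forall x y, P x -> P y -> P (x * y)%g) -> (forall x, x \in A -> P x) ->
  forall x, x \in <<A>>%g -> P x.
Proof.
move=> P1 PM PA x /gen_prodgP [n [f fA ->]].
by elim/big_ind: _ => // i _; apply: PA.
Qed.

Lemma subrACA (V : zmodType) (a b c d : V) : (a - b) - (c - d) = (a - c) - (b - d).
Proof. by rewrite !opprD !opprK addrACA. Qed.

Variables r s k : nat.
Implicit Types (u v : sidx r) (g h w : {perm sidx r}) (x y : 'rV[int]_r) (p : rind r).

Definition sign (b : bool) : int := if b then -1 else 1.
Definition negs u : sidx r := (u.1, ~~ u.2).

Lemma svecE u t : svec u 0 t = if t == u.1 then sign u.2 else 0.
Proof.
rewrite /svec /evec !mxE eqxx.
by case: (t == u.1); case: u.2; rewrite /sign ?mulr1 ?mulr0.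
Qed.

Lemma svec_negs u : svec (negs u) = - svec u.
Proof.
apply/rowP=> t; rewrite [RHS]mxE !svecE /sign /=.
by case: (t == u.1); case: u.2; rewrite ?oppr0 ?opprK.
Qed.

Lemma rvecE (i j : 'I_r) b : rvec (i, j, b) = svec (i, false) + svec (j, ~~ b).
Proof. by rewrite /rvec /svec /=; case: b; rewrite /= ?scale1r ?scaleN1r. Qed.

Lemma act_is_zmod_morphism g : zmod_morphism (act g).
Proof. by move=> x y; rewrite /act -sumrB; apply: eq_bigr => a _; rewrite !mxE scalerBl. Qed.
HB.instance Definition _ g := GRing.isZmodMorphism.Build _ _ (act g) (act_is_zmod_morphism g).

Lemma act1 x : act 1 x = x.
Proof. by rewrite {2}(row_sum_delta x); apply: eq_bigr => a _; rewrite perm1 /svec scale1r. Qed.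

Lemma lenG1 : lenG (1%g : {perm sidx r}) = 0%N.
Proof.
rewrite /lenG (eq_in_count (a2 := pred0)) ?count_pred0 // => x x_pos.
by rewrite /= act1 x_pos.
Qed.

Lemma lenM1 : lenM s (1%g : {perm sidx r}) = 0%N.
Proof.
rewrite /lenM (eq_in_count (a2 := pred0)) ?count_pred0 // => x x_pos.
by rewrite /= act1 x_pos andbF.
Qed.

Lemma act_svec g u : {morph g : v / negs v} -> act g (svec u) = svec (g u).
Proof.
move=> gN; rewrite /act (bigD1 u.1) //= big1 => [|a /negPf na]; last by rewrite svecE na scale0r.
rewrite svecE eqxx addr0; case: u => a [] /=; last by rewrite scale1r.
by rewrite scaleN1r -svec_negs -gN.
Qed.

Lemma eq_svecD u v u' v' : v != negs u -> v' != negs u' ->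
  svec u + svec v = svec u' + svec v' -> (u' = u /\ v' = v) \/ (u' = v /\ v' = u).
Proof.
case: u v u' v' => [a x] [b y] [a' x'] [b' y'] nuv nuv' E.
have coord t : svec (a, x) 0 t + svec (b, y) 0 t = svec (a', x') 0 t + svec (b', y') 0 t.
  by have := congr1 (fun z : 'rV[int]_r => z 0 t) E; rewrite !mxE.
move: (coord a) (coord b) (coord a') (coord b') nuv nuv' => {E coord}.
rewrite !svecE /negs !xpair_eqE /=.
case: x y x' y' => [] [] [] []; rewrite /sign /= ?andbT ?andbF;
repeat (case: eqP => [?|?]; subst => //=); first [by left | by right | lia].
Qed.

Lemma eq_negs_sym u v : (v == negs u) = (u == negs v).
Proof. by case: u v => a x [b y]; rewrite /negs !xpair_eqE eq_sym; case: x; case: y. Qed.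

Definition pos_pair u v : bool := ~~ (if (v.1 < u.1)%N then v.2 else u.2).

Lemma negs_eq1 u v : v.1 = u.1 -> v != negs u -> v = u.
Proof.
case: u v => a x [b y] /= -> /negP; rewrite /negs xpair_eqE eqxx.
by case: x y => [] [] //= /(_ isT).
Qed.

Lemma pos_pairC u v : v != negs u -> pos_pair u v = pos_pair v u.
Proof.
move=> nuv; rewrite /pos_pair; case: ltngtP => // /val_inj e.
by rewrite (negs_eq1 e nuv).
Qed.

Lemma mem_pos_rvec p : posroot p -> rvec p \in pos r.
Proof. by move=> hp; apply: map_f; rewrite mem_enum. Qed.

Lemma posroot_le (i j : 'I_r) b : posroot (i, j, b) -> (i <= j)%N.
Proof. by case: b => //= /ltnW. Qed.

Lemma posroot_negs (i j : 'I_r) b : posroot (i, j, b) -> (j, ~~ b) != negs (i, false).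
Proof.
rewrite /negs xpair_eqE andbC; case: b => //= lt_ij.
by apply: contraTneq lt_ij => ->; rewrite ltnn.
Qed.

Lemma mem_pos_svecD u v : v != negs u -> (svec u + svec v \in pos r) = pos_pair u v.
Proof.
wlog le_uv : u v / (u.1 <= v.1)%N => [hwlog nuv|].
  case: (leqP u.1 v.1) => [|/ltnW] le; first exact: hwlog.
  by rewrite addrC pos_pairC // hwlog // -eq_negs_sym.
move=> nuv; apply/idP/idP.
- case/mapP=> [[[i j] b]]; rewrite mem_enum unfold_in => hp; rewrite rvecE => /eq_svecD.
  case/(_ nuv (posroot_negs hp)) => [[<- <-]|[<- <-]].
    by rewrite /pos_pair /= ltnNge (posroot_le hp).
  rewrite pos_pairC; last by rewrite eq_negs_sym posroot_negs.
  by rewrite /pos_pair /= ltnNge (posroot_le hp).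
- case: u v le_uv nuv => a x [b y] /= le_ab nuv.
  rewrite /pos_pair /= ltnNge le_ab /= => /negPf x0.
  rewrite x0 -[y]negbK -rvecE mem_pos_rvec //=; case: y nuv => //= nuv.
  by rewrite ltn_neqAle le_ab andbT; apply: contra nuv => /eqP /val_inj ->; rewrite x0.
Qed.

Lemma pairP_is_zmod_morphism n : zmod_morphism (@pairP r n).
Proof. by move=> x y; rewrite /pairP -sumrB; apply: eq_bigr => t _; rewrite !mxE. Qed.
HB.instance Definition _ n :=
  GRing.isZmodMorphism.Build _ _ (@pairP r n) (pairP_is_zmod_morphism n).

Lemma pairP_svec n u : pairP n (svec u) = if (u.1 < n)%N then sign u.2 else 0.
Proof.
rewrite /pairP big_mkcond (bigD1 u.1) //= big1 => [|t /negPf nt].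
  by rewrite svecE eqxx addr0.
by rewrite svecE nt; case: ifP.
Qed.

Lemma pairP_rvec n (i j : 'I_r) b : pairP n (rvec (i, j, b)) =
  (if (i < n)%N then 1 else 0) + (if (j < n)%N then sign (~~ b) else 0).
Proof. by rewrite rvecE raddfD /= !pairP_svec. Qed.

Lemma inM_rvec (i j : 'I_r) b : inM s (rvec (i, j, b)) = ((i < s)%N == (j < s)%N).
Proof.
rewrite [inM _ _]/inM -/(pairP s _) pairP_rvec /sign.
by case: (i < s)%N; case: (j < s)%N; case: b.
Qed.

Lemma notM_rvec (i j : 'I_r) b :
  posroot (i, j, b) -> ~~ inM s (rvec (i, j, b)) -> (i < s)%N && (s <= j)%N.
Proof.
move/posroot_le=> le_ij; rewrite inM_rvec.
by case: (ltnP i s); case: (ltnP j s) => //=; lia.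
Qed.

Lemma refl_negs p : {morph refl p : u / negs u}.
Proof.
case: p => [[i j] b] [c x]; rewrite /refl !permE /refl_fun /negs /=.
by case: b; case: (c == i); case: (c == j).
Qed.

Lemma refl_block p : inM s (rvec p) -> {mono refl p : u / (u.1 < s)%N}.
Proof.
case: p => [[i j] b]; rewrite inM_rvec => /eqP e_ij [c x]; rewrite /refl permE /=.
by case: eqP => [->|_] //; case: eqP => [->|].
Qed.

Lemma negs_morphM g h :
  {morph g : u / negs u} -> {morph h : u / negs u} -> {morph (g * h)%g : u / negs u}.
Proof. by move=> gN hN u; rewrite !permM gN hN. Qed.

Lemma WM_negs g : g \in WM r s -> {morph g : u / negs u}.
Proof.
apply: (@gen_ind _ (fun g => {morph g : u / negs u})) => [u|g1 g2|x /imsetP [p _ ->]].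
- by rewrite !perm1.
- exact: negs_morphM.
- exact: refl_negs.
Qed.

Lemma WM_block g : g \in WM r s -> {mono g : u / (u.1 < s)%N}.
Proof.
apply: (@gen_ind _ (fun g => {mono g : u / (u.1 < s)%N})) => [u|g1 g2 g1B g2B u|x /imsetP [p]].
- by rewrite perm1.
- by rewrite permM g2B g1B.
- by rewrite inE => /andP [_ hM] ->; apply: refl_block.
Qed.

Lemma act_rvec_pos g (i j : 'I_r) b : {morph g : u / negs u} -> posroot (i, j, b) ->
  (act g (rvec (i, j, b)) \in pos r) = pos_pair (g (i, false)) (g (j, ~~ b)).
Proof.
move=> gN hp; rewrite rvecE raddfD /= !act_svec // mem_pos_svecD //.
by rewrite -gN (inj_eq perm_inj) posroot_negs.
Qed.

Definition invM g p : bool := inM s (rvec p) && (act g (rvec p) \notin pos r).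

Lemma lenM_invM g : lenM s g = (\sum_(p | posroot p) invM g p)%N.
Proof.
rewrite /lenM /pos count_map -sum1_count big_mkcond big_enum_cond /=.
by apply: eq_big => [p|p _]; rewrite ?unfold_in ?andbT //; case: ifP.
Qed.

Lemma invM_rvec g (i j : 'I_r) b : {morph g : u / negs u} -> posroot (i, j, b) ->
  invM g (i, j, b) = ((i < s)%N == (j < s)%N) && ~~ pos_pair (g (i, false)) (g (j, ~~ b)).
Proof. by move=> gN hp; rewrite /invM inM_rvec act_rvec_pos. Qed.

Definition signflip (a : 'I_r) : {perm sidx r} := refl (a, a, true).

Lemma signflipE a u : signflip a u = if u.1 == a then negs u else u.
Proof.
case: u => c x; rewrite /signflip /refl permE /refl_fun /=.
by case: eqP => [->|]; rewrite ?orbb.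
Qed.

Definition flip_root (a : 'I_r) (p : rind r) : rind r :=
  let '(i, j, b) := p in if (j == a) && (i != a) then (i, j, ~~ b) else (i, j, b).

Lemma flip_rootK a : involutive (flip_root a).
Proof. by case=> [[i j] b] /=; case: ifP => h /=; rewrite h ?negbK. Qed.

Lemma posroot_flip_root a p : posroot (flip_root a p) = posroot p.
Proof.
case: p => [[i j] b] /=; case: eqP => [->|] //=; case: eqP => //= /eqP n_ia.
by rewrite fun_if /= ltn_neqAle val_eqE n_ia; case: b.
Qed.

Lemma pos_pair_neg_leq (c : 'I_r) v : (~~ pos_pair (c, false) v <= ~~ pos_pair (c, true) v)%N.
Proof. by rewrite /pos_pair /=; case: ifP. Qed.

Lemma invM_signflip_diag w a : {morph w : u / negs u} -> (w (a, false)).2 ->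
  invM w (a, a, true) && ~~ invM (signflip a * w)%g (a, a, true).
Proof.
move=> wN neg_a; have w'N := negs_morphM (refl_negs (a, a, true)) wN.
have p0 : posroot (a, a, true) by rewrite /= leqnn.
rewrite !invM_rvec // !permM !signflipE /= !eqxx /= wN.
by case: (w (a, false)) neg_a => c [] //; rewrite /pos_pair /= ltnn.
Qed.

Lemma invM_signflip_le w a p : {morph w : u / negs u} -> (w (a, false)).2 -> posroot p ->
  (invM (signflip a * w)%g (flip_root a p) <= invM w p)%N.
Proof.
move=> wN neg_a; case: p => [[i j] b] hp.
have w'N := negs_morphM (refl_negs (a, a, true)) wN.
have hp' : posroot (flip_root a (i, j, b)) by rewrite posroot_flip_root.
move: hp hp'; rewrite /flip_root.
case: (eqVneq j a) => [->|n_ja]; case: (eqVneq i a) => [->|n_ia] /= hp hp'.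
- case: b hp hp' => [_ _|]; last by rewrite /= ltnn.
  by have /andP [_ /negPf ->] := invM_signflip_diag wN neg_a.
- by rewrite !invM_rvec // !permM !signflipE /= !eqxx /= (negPf n_ia) negbK.
- rewrite !invM_rvec // !permM !signflipE /= !eqxx /= (negPf n_ja) wN.
  case: (w (a, false)) neg_a => c [] // _.
  by case: (_ == _) => //=; apply: pos_pair_neg_leq.
- by rewrite !invM_rvec // !permM !signflipE /= (negPf n_ja) (negPf n_ia).
Qed.

(* [(signflip a * w)%g] is [w s_a]; [flip_root a] maps the M-inversions of [w s_a] into those
   of [w], missing [2 eps_a]. *)
Lemma lenM_signflip_lt w a : {morph w : u / negs u} -> (w (a, false)).2 ->
  (lenM s (signflip a * w)%g < lenM s w)%N.
Proof.
move=> wN neg_a; rewrite !lenM_invM (reindex_inj (can_inj (flip_rootK a))) /=.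
rewrite (eq_bigl (@posroot r)) => [|p]; last by rewrite posroot_flip_root.
have p0 : posroot (a, a, true) by rewrite /= leqnn.
rewrite (bigD1 _ p0) [X in (_ < X)%N](bigD1 _ p0) /= eqxx andbF.
have /andP [-> /negPf ->] := invM_signflip_diag wN neg_a.
by rewrite ltnS; apply: leq_sum => p /andP [hp _]; apply: invM_signflip_le.
Qed.

Lemma signflip_WQ (a : 'I_r) : (k <= a)%N -> signflip a \in WQ r s k.
Proof.
move=> le_ka; apply/mem_gen/imsetP; exists (a, a, true) => //.
by rewrite inE inM_rvec eqxx /inLevi pairP_rvec ltnNge le_ka /= addr0 leqnn.
Qed.

Lemma WMQ_sign w (a : 'I_r) : WMQ s k w -> (k <= a)%N -> ~~ (w (a, false)).2.
Proof.
case/andP=> w_WM /forall_inP w_min le_ka; apply/negP => neg_a.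
have := w_min _ (signflip_WQ le_ka).
by rewrite leqNgt (lenM_signflip_lt (WM_negs w_WM) neg_a).
Qed.

Lemma Posz_count (T : Type) (P : pred T) (xs : seq T) :
  (count P xs)%:Z = \sum_(x <- xs) (P x)%:Z.
Proof. by elim: xs => [|x xs IH]; rewrite ?big_nil ?big_cons //= PoszD IH. Qed.

Lemma theta_sub_thetaM (ws : seq {perm sidx r}) : theta k ws - thetaM s k ws =
  (pairP k (chi k (1 : {perm sidx r})%g) - pairP k (chiM s k (1 : {perm sidx r})%g)) -
  \sum_(w <- ws) (pairP k (chi k w) - pairP k (chiM s k w)).
Proof.
by rewrite /theta /thetaM !(raddfB (pairP k)) !(raddf_sum (pairP k) ws) [in RHS]sumrB subrACA.
Qed.

Lemma expdimG_sub_expdimM (ws : seq {perm sidx r}) : expdimG k ws - expdimM s k ws =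
  ((dimGP r k)%:Z - (dimMQ r s k)%:Z) - \sum_(w <- ws) (codimG k w - codimM s k w).
Proof. by rewrite /expdimG /expdimM [in RHS]sumrB subrACA. Qed.

Hypothesis le_ks : (k <= s)%N.

Lemma WMQ_act_pos w x : WMQ s k w ->
  x \in pos r -> ~~ inM s x -> inLevi k x -> act w x \in pos r.
Proof.
move=> w_WMQ /mapP [[[i j] b]]; rewrite mem_enum unfold_in => hp -> hM.
have /andP [lt_is le_sj] := notM_rvec hp hM.
have jk : (j < k)%N = false by rewrite ltnNge (leq_trans le_ks le_sj).
rewrite /inLevi pairP_rvec jk addr0; case: ifP => // /negbT; rewrite -leqNgt => le_ki _.
have w_WM := proj1 (andP w_WMQ).
rewrite (act_rvec_pos (WM_negs w_WM) hp).
have := WMQ_sign w_WMQ le_ki; have := WM_block w_WM (i, false); have := WM_block w_WM (j, ~~ b).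
case: (w (i, false)) => c sc; case: (w (j, ~~ b)) => d sd /=.
have js : (j < s)%N = false by rewrite ltnNge le_sj.
rewrite lt_is js => /negbT; rewrite -leqNgt => le_sd lt_cs pos_c.
by rewrite /pos_pair /= ltnNge (ltnW (leq_trans lt_cs le_sd)).
Qed.

Lemma pairP_notM x : x \in pos r -> ~~ inM s x -> ~~ inLevi k x -> pairP k x = 1.
Proof.
case/mapP=> [[[i j] b]]; rewrite mem_enum unfold_in => hp -> hM.
have /andP [_ le_sj] := notM_rvec hp hM.
have jk : (j < k)%N = false by rewrite ltnNge (leq_trans le_ks le_sj).
by rewrite /inLevi pairP_rvec jk addr0; case: ifP.
Qed.

Lemma pairP_chi_sub_chiM w :
  (forall x, x \in pos r -> ~~ inM s x -> inLevi k x -> act w x \in pos r) ->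
  pairP k (chi k w) - pairP k (chiM s k w) = codimG k w - codimM s k w.
Proof.
move=> wL; rewrite /chi /chiM !(raddf_sum (pairP k)).
rewrite /codimG /codimM /dimGP /dimMQ /lenG /lenM !Posz_count.
rewrite [\sum_(_ <- _ | _) _]big_mkcond [X in _ - X]big_mkcond /= -!sumrB.
apply: eq_big_seq => x x_pos.
case xM: (inM s x) => /=; first by case: (_ && _); lia.
case xL: (inLevi k x) => /=; first by rewrite wL ?xM ?xL //=; lia.
by rewrite pairP_notM ?xM ?xL //; case: (_ \in _); lia.
Qed.

Lemma pairP_chi1_sub_chiM1 :
  pairP k (chi k (1 : {perm sidx r})%g) - pairP k (chiM s k (1 : {perm sidx r})%g) =
  (dimGP r k)%:Z - (dimMQ r s k)%:Z.
Proof.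
rewrite pairP_chi_sub_chiM => [|x x_pos _ _]; last by rewrite act1.
by rewrite /codimG /codimM lenG1 lenM1 !subr0.
Qed.

End TypeC.

Theorem mainTheorem9 (r s k : nat) (hk : (1 <= k)%N) (hks : (k <= s)%N)
    (hsr : (s < r)%N) (ws : seq {perm sidx r})
    (hws : all (WMQ s k) ws) :
  theta k ws - thetaM s k ws = expdimG k ws - expdimM s k ws.
Proof.
have Dw w : w \in ws -> pairP k (chi k w) - pairP k (chiM s k w) = codimG k w - codimM s k w.
  by move=> w_ws; apply: (pairP_chi_sub_chiM hks) => x; apply: (WMQ_act_pos hks (allP hws w w_ws)).
by rewrite theta_sub_thetaM expdimG_sub_expdimM (pairP_chi1_sub_chiM1 r hks) (eq_big_seq _ Dw).
Qed.
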